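(* For $T>0$ and $x\in[0,1]$ let $$I(x) = \frac{2x}{\pi}\int_{-T}^{T}\frac{e^s}{e^{2s}+x}\,ds.$$ Then for every $T>0$ and every $x\in[0,1]$, $$|\sqrt{x}-I(x)| < \frac{4}{\pi}e^{-T} < \frac32 e^{-T}.$$ *)

From Stdlib Require Import Reals.
From Coquelicot Require Import Coquelicot.
Open Scope R_scope.

Definition I_T (T x : R) : R :=
  (2 * x / PI) * RInt (fun s => exp s / (exp (2 * s) + x)) (- T) T.

(** With [r = sqrt x] and [e = exp (- T)], the substitution [u = exp s / r]
    gives [I_T T x = 2 r / PI * (atan (exp T / r) - atan (e / r))], and
    [atan (/ y) = PI / 2 - atan y] turns the defect into
    [sqrt x - I_T T x = 2 r / PI * (atan (r e) + atan (e / r))].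
    Since [0 < atan y < y] for [y > 0], this lies strictly between [0] and
    [2 e (r^2 + 1) / PI <= 4 e / PI]. *)

From Stdlib Require Import Reals Lra.
From Coquelicot Require Import Coquelicot.
Open Scope R_scope.

Lemma atan_gt0 y : 0 < y -> 0 < atan y.
Proof. intros Hy; rewrite <- atan_0; now apply atan_increasing. Qed.

Lemma atan_lt_id y : 0 < y -> atan y < y.
Proof.
  intros Hy.
  destruct (MVT_cor2 atan (fun c => / (1 + c ^ 2)) 0 y Hy)
    as [c [Hmvt Hc]]; [intros c _; apply derivable_pt_lim_atan|].
  rewrite atan_0, !Rminus_0_r in Hmvt.
  assert (Hslope : / (1 + c ^ 2) < 1).
  { rewrite <- Rinv_1; apply Rinv_lt_contravar; nra. }
  nra.
Qed.

Lemma is_RInt_exp_div_exp2_add x a b : 0 < x ->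
  is_RInt (fun s => exp s / (exp (2 * s) + x)) a b
    ((atan (exp b / sqrt x) - atan (exp a / sqrt x)) / sqrt x).
Proof.
  intros Hx.
  assert (Hr : 0 < sqrt x) by now apply sqrt_lt_R0.
  assert (Hrr : sqrt x * sqrt x = x) by (apply sqrt_sqrt; lra).
  replace ((atan (exp b / sqrt x) - atan (exp a / sqrt x)) / sqrt x)
    with (atan (exp b / sqrt x) / sqrt x - atan (exp a / sqrt x) / sqrt x)
    by (field; lra).
  apply (is_RInt_derive (fun s => atan (exp s / sqrt x) / sqrt x)).
  - intros s _; auto_derive; [easy|].
    assert (Hexp2 : exp (2 * s) = exp s * exp s)
      by (rewrite <- exp_plus; f_equal; ring).
    set (r := sqrt x) in Hr, Hrr |- *.
    rewrite Hexp2, <- Hrr.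
    pose proof (exp_pos s); field; split; nra.
  - intros s _.
    apply (ex_derive_continuous (K := R_AbsRing) (V := R_NormedModule)).
    auto_derive; pose proof (exp_pos (2 * s)); lra.
Qed.

Lemma I_T_0 T : I_T T 0 = 0.
Proof. unfold I_T, Rdiv; ring. Qed.

Lemma sqrt_sub_I_T T x : 0 < x ->
  sqrt x - I_T T x =
  2 * sqrt x / PI * (atan (sqrt x * exp (- T)) + atan (exp (- T) / sqrt x)).
Proof.
  intros Hx.
  assert (Hr : 0 < sqrt x) by now apply sqrt_lt_R0.
  assert (Hrr : sqrt x * sqrt x = x) by (apply sqrt_sqrt; lra).
  assert (He : 0 < exp (- T)) by apply exp_pos.
  assert (Hcompl : atan (exp T / sqrt x) = PI / 2 - atan (sqrt x * exp (- T))).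
  { rewrite <- atan_inv by nra; f_equal.
    rewrite exp_Ropp; pose proof (exp_pos T); field; lra. }
  unfold I_T.
  rewrite (is_RInt_unique _ _ _ _ (is_RInt_exp_div_exp2_add x (- T) T Hx)).
  rewrite Hcompl.
  set (r := sqrt x) in Hr, Hrr |- *.
  rewrite <- Hrr.
  pose proof PI_RGT_0; field; lra.
Qed.

Lemma mul_atan_mul_add_atan_div_lt r e : 0 < r -> 0 < e ->
  r * (atan (r * e) + atan (e / r)) < e * (r * r + 1).
Proof.
  intros Hr He.
  pose proof (atan_lt_id (r * e) ltac:(nra)).
  pose proof (atan_lt_id (e / r) ltac:(now apply Rdiv_lt_0_compat)).
  assert (r * (e / r) = e) by (field; lra).
  nra.
Qed.

Lemma four_div_PI_lt_3_2 : 4 / PI < 3 / 2.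
Proof.
  pose proof PI2_3_2.
  apply Rmult_lt_reg_r with PI; [lra|].
  unfold Rdiv; rewrite Rmult_assoc, Rinv_l by lra; lra.
Qed.

Theorem lemmaA1 : forall T x : R, 0 < T -> 0 <= x <= 1 ->
  Rabs (sqrt x - I_T T x) < 4 / PI * exp (- T) /\
  4 / PI * exp (- T) < 3 / 2 * exp (- T).
Proof.
  intros T x _ Hx.
  assert (Hc : 0 < 2 / PI) by (apply Rdiv_lt_0_compat; [lra | exact PI_RGT_0]).
  assert (He : 0 < exp (- T)) by apply exp_pos.
  split; [|apply Rmult_lt_compat_r; [exact He | exact four_div_PI_lt_3_2]].
  replace (4 / PI) with (2 / PI * 2) by (field; apply PI_neq0).
  destruct (Req_dec x 0) as [-> | Hx0].
  { rewrite I_T_0, sqrt_0, Rminus_0_r, Rabs_R0; nra. }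
  assert (Hr : 0 < sqrt x) by (apply sqrt_lt_R0; lra).
  assert (Hrr : sqrt x * sqrt x = x) by (apply sqrt_sqrt; lra).
  rewrite sqrt_sub_I_T by lra.
  pose proof (atan_gt0 (sqrt x * exp (- T)) ltac:(nra)) as HA.
  pose proof (atan_gt0 (exp (- T) / sqrt x) ltac:(now apply Rdiv_lt_0_compat)) as HB.
  pose proof (mul_atan_mul_add_atan_div_lt (sqrt x) (exp (- T)) Hr He) as HS.
  revert HA HB HS.
  generalize (atan (sqrt x * exp (- T))) (atan (exp (- T) / sqrt x)).
  intros A B HA HB HS; rewrite Hrr in HS.
  replace (2 * sqrt x / PI * (A + B)) with (2 / PI * (sqrt x * (A + B)))
    by (field; apply PI_neq0).
  rewrite Rabs_pos_eq, Rmult_assoc by (apply Rmult_le_pos; nra).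
  apply Rmult_lt_compat_l; [exact Hc | nra].
Qed.
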